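(* Let $p$ be a prime and $G$ a $p$-group of maximal class of order $p^m$ ($m\ge 4$) with positive degree of commutativity. (1) If $G$ possesses an abelian maximal subgroup, then $$A_G(t)=\frac{1}{p^m}\left(\frac{p}{1-p^mt}+\frac{p^m-p^{m-1}}{1-p^2t}+\frac{p^{m-1}-p}{1-p^{m-1}t}\right).$$ (2) If $[P_1,P_3]=1$ and $G$ possesses no abelian maximal subgroup, then $$A_G(t)=\frac{1}{p^m}\left(\frac{p}{1-p^mt}+\frac{p^m-p^{m-1}}{1-p^2t}+\frac{p^{m-1}-p^{m-3}}{1-p^{m-2}t}+\frac{p^{m-3}-p}{1-p^{m-1}t}\right).$$
   Context: For a finite group $G$ and $n\ge0$, let $\alpha_{G,n}$ be the number of orbits of $G$ acting on $G^n$ by simultaneous conjugation, and $A_G(t)=\sum_{n\ge0}\alpha_{G,n}t^n$. A group of order $p^m$ with $m\ge4$ is of maximal class if it has nilpotency class $m-1$. Let $\gamma_i(G)$ be the lower central series ($\gamma_1(G)=G$, $\gamma_{i+1}(G)=[\gamma_i(G),G]$). Define $P_0=G$, $P_1$ to be the centralizer in $G$ of $\gamma_2(G)/\gamma_4(G)$ (i.e. $\{g\in G: [g,\gamma_2(G)]\le\gamma_4(G)\}$), and $P_i=\gamma_i(G)$ for $2\le i\le m$. The degree of commutativity $l$ of $G$ is the maximum integer such that $[P_i,P_j]\le P_{i+j+l}$ for all $i,j\ge1$ if $P_1$ is not abelian (with $P_k=1$ for $k\ge m$), and $l=m-3$ if $P_1$ is abelian. Positive degree of commutativity means $l>0$.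 *)

From mathcomp Require Import all_boot all_fingroup all_solvable.
Set Implicit Arguments. Unset Strict Implicit. Unset Printing Implicit Defensive.
Import GroupScope.


Section Defs.
Variable gT : finGroupType.

Definition tuples_in (G : {set gT}) (n : nat) : {set {ffun 'I_n -> gT}} :=
  [set f : {ffun 'I_n -> gT} | [forall i, f i \in G]].

Definition sconj_orbit (G : {set gT}) (n : nat) (f : {ffun 'I_n -> gT})
  : {set {ffun 'I_n -> gT}} :=
  [set [ffun i => f i ^ g] | g in G].

Definition alpha (G : {set gT}) (n : nat) : nat :=
  #|[set sconj_orbit G f | f in tuples_in G n]|.

Definition P1 (G : {set gT}) : {set gT} :=
  [set g in G | [forall x in 'L_2(G), ([~ g, x])%g \in 'L_4(G)]].

Definition Pser (G : {set gT}) (i : nat) : {set gT} :=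
  if i == 0%N then G else if i == 1%N then P1 G else 'L_i(G).

Definition comm_deg_prop (G : {set gT}) (l : nat) : Prop :=
  forall i j, 1 <= i -> 1 <= j -> [~: Pser G i, Pser G j] \subset Pser G (i + j + l).

Definition is_degree_of_commutativity (G : {set gT}) (m l : nat) : Prop :=
  (abelian (P1 G) /\ l = m - 3) \/
  (~~ abelian (P1 G) /\ comm_deg_prop G l /\ forall l', comm_deg_prop G l' -> l' <= l).

End Defs.

(* Burnside's lemma gives |G| alpha_{G,n} = sum_{g in G} |C_G(g)|^n, so
   everything reduces to the orders of centralisers.  In a p-group of maximal
   class |gamma_i(G)| = p^(m-i) for i >= 2 and P_1 is a maximal subgroup.
   Positive degree of commutativity means [P_1, gamma_j] <= gamma_(j+2);
   hence an element s outside P_1 centralises no element of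
   gamma_2 \ gamma_(m-1), which forces |C_G(s)| = p^2 and in turn
   C_G(x) <= P_1 for every x in P_1 \ gamma_(m-1), while gamma_(m-1) is
   central.  If P_1 is abelian (it is the only candidate for an abelian
   maximal subgroup), C_G(x) = P_1 on P_1 \ gamma_(m-1).  If [P_1, gamma_3] = 1
   and P_1 is not abelian, C_G(x) = P_1 on gamma_3 \ gamma_(m-1) and
   |C_G(x)| = p^(m-2) on P_1 \ gamma_3.  Summing |C_G(x)|^n over these layers
   gives the two formulas. *)

From mathcomp Require Import all_boot all_fingroup all_solvable zify.
Set Implicit Arguments.
Unset Strict Implicit.
Unset Printing Implicit Defensive.

Local Open Scope group_scope.

Lemma decreasing_nat_eq_sub (f : nat -> nat) (i0 n : nat) :
    (forall i, i0 <= i < n -> f i.+1 < f i) -> f i0 <= n - i0 ->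
  forall i, i0 <= i <= n -> f i = (n - i)%N.
Proof.
move=> f_dec f_i0 i /andP[le_i0i le_in].
have f_ub k : i0 + k <= n -> f (i0 + k) + k <= f i0.
  elim: k => [|k IHk] le_kn; first by rewrite !addn0.
  have := f_dec (i0 + k) ltac:(lia); have := IHk ltac:(lia).
  rewrite !addnS; lia.
have f_lb k : k <= n - i0 -> k <= f (n - k).
  elim: k => [|k IHk] le_kn //.
  have := f_dec (n - k.+1) ltac:(lia); rewrite subnSK; last lia.
  have := IHk ltac:(lia); lia.
have := f_ub (i - i0); have := f_lb (n - i); rewrite subKn // subnKC //; lia.
Qed.

Section SimultaneousConjugation.
Variables (gT : finGroupType) (n : nat).

Definition sconj (f : {ffun 'I_n -> gT}) (g : gT) : {ffun 'I_n -> gT} :=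
  [ffun i => f i ^ g].

Lemma sconj1 : sconj^~ 1 =1 id.
Proof. by move=> f; apply/ffunP=> i; rewrite ffunE conjg1. Qed.

Lemma sconjM f : act_morph sconj f.
Proof. by move=> x y; apply/ffunP=> i; rewrite !ffunE conjgM. Qed.

Definition sconj_action := TotalAction sconj1 sconjM.

Lemma acts_tuples_in (G : {group gT}) :
  [acts G, on tuples_in G n | sconj_action].
Proof.
apply/actsP=> g Gg f; rewrite !inE.
by apply: eq_forallb => i; rewrite /= /sconj ffunE groupJr.
Qed.

Lemma afix_tuples_in (G : {group gT}) g :
  'Fix_(tuples_in G n | sconj_action)[g] = [set f | f \in ffun_on 'C_G[g]].
Proof.
apply/setP=> f; rewrite in_setI [f \in tuples_in _ _]inE [RHS]inE.
apply/andP/ffun_onP.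
  case=> /forallP Gf /afix1P fixf i.
  rewrite inE Gf; apply/cent1P/commgP/conjg_fixP.
  by move/ffunP/(_ i): fixf; rewrite ffunE.
move=> Cf; split; first by apply/forallP=> i; case/setIP: (Cf i).
apply/afix1P/ffunP=> i; rewrite ffunE.
by case/setIP: (Cf i) => _ /cent1P/commgP/conjg_fixP.
Qed.

Lemma mul_card_alpha (G : {group gT}) :
  (#|G| * alpha G n)%N = (\sum_(g in G) #|'C_G[g]| ^ n)%N.
Proof.
rewrite mulnC -(Frobenius_Cauchy (acts_tuples_in G)).
by apply: eq_bigr => g _; rewrite afix_tuples_in cardsE card_ffun_on card_ord.
Qed.

End SimultaneousConjugation.

Lemma sum_nat_layer (T : finType) (A B : {set T}) (F : T -> nat) c :
    B \subset A -> {in A :\: B, forall x, F x = c} ->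
  \sum_(x in A) F x = (\sum_(x in B) F x + (#|A| - #|B|) * c)%N.
Proof.
move=> sBA Fc; rewrite (big_setID B) (setIidPr sBA) /=.
rewrite -cardsDS // -sum_nat_const.
by congr (_ + _)%N; apply: eq_bigr.
Qed.

Section GroupFacts.
Variable gT : finGroupType.
Implicit Types (A B : {set gT}) (G H K P T : {group gT}).

Lemma index_proper_pgroup p H K :
  prime p -> p.-group K -> H \proper K -> p <= #|K : H|.
Proof.
move=> p_pr pK /andP[_ not_sKH].
have [k idxE] := p_natP (pnat_dvd (dvdn_indexg K H) pK).
have := not_sKH; rewrite -indexg_gt1 idxE.
by case: k {idxE} => [|k] // _; rewrite expnS leq_pmulr ?expn_gt0 ?prime_gt0.
Qed.

Lemma card_proper_pgroup p H K :
  prime p -> p.-group K -> H \proper K -> (p * #|H| <= #|K|)%N.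
Proof.
move=> p_pr pK ltHK; rewrite -(Lagrange (proper_sub ltHK)) mulnC leq_pmul2l //.
exact: index_proper_pgroup.
Qed.

Lemma prime_index_cover H T K :
  prime #|K : H| -> H \subset T -> T \subset K -> ~~ (T \subset H) -> T :=: K.
Proof.
move=> pr_idx sHT sTK not_sTH; apply/eqP; rewrite eqEsubset sTK /=.
apply: contraR not_sTH => not_sKT.
have /maxgroupP[_ maxH] := p_index_maximal (subset_trans sHT sTK) pr_idx.
by rewrite (maxH T) // properE sTK.
Qed.

Lemma center_index_le_p_abelian p P :
  prime p -> p.-group P -> (#|P| <= p * #|'Z(P)|)%N -> abelian P.
Proof.
move=> p_pr pP; rewrite -(Lagrange (center_sub P)) mulnC leq_pmul2r //.
rewrite -card_quotient ?normal_norm ?center_normal // => le_p.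
apply: cyclic_center_factor_abelian.
have [k oPZ] := p_natP (quotient_pgroup 'Z(P) pP); case: k oPZ => [|[|k]] oPZ.
- by rewrite (card1_trivg oPZ) cyclic1.
- by apply: prime_cyclic; rewrite oPZ expn1.
have : p ^ 1 < p ^ k.+2 by rewrite ltn_exp2l // prime_gt1.
by rewrite expn1 -oPZ ltnNge le_p.
Qed.

Lemma subcent1_id G x : x \in G -> x \in 'C_G[x].
Proof. by move=> Gx; rewrite inE Gx cent1id. Qed.

Lemma mem_commgC K x y : ([~ x, y] \in K) = ([~ y, x] \in K).
Proof. by rewrite -invg_comm groupV. Qed.

Lemma commG_subP A B K :
  reflect (forall a b, a \in A -> b \in B -> [~ a, b] \in K)
          ([~: A, B] \subset K).
Proof.
apply: (iffP idP) => [sABK a b Aa Bb | sABK].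
  exact: subsetP sABK _ (mem_commg Aa Bb).
by rewrite gen_subG; apply/subsetP=> _ /imset2P[a b Aa Bb ->]; apply: sABK.
Qed.

(* [P1 G] is literally [cent_mod G 'L_2(G) 'L_4(G)]. *)
Definition cent_mod A B K := [set u in A | [forall b in B, [~ u, b] \in K]].

Lemma cent_modP A B K u :
  reflect (u \in A /\ {in B, forall b, [~ u, b] \in K}) (u \in cent_mod A B K).
Proof. by rewrite inE; apply: (iffP andP) => -[Au /forall_inP]. Qed.

Lemma group_set_cent_mod H B K : H \subset 'N(K) -> group_set (cent_mod H B K).
Proof.
move=> nKH; apply/group_setP; split.
  by apply/cent_modP; split=> // b _; rewrite comm1g.
move=> u v /cent_modP[Hu cuK] /cent_modP[Hv cvK]; apply/cent_modP.
split=> [|b Bb]; first exact: groupM.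
by rewrite commMgJ groupM ?cvK ?memJ_norm ?cuK ?(subsetP nKH).
Qed.

Lemma group_set_P1 G : group_set (P1 G).
Proof. exact: group_set_cent_mod (lcn_norm 4 G). Qed.

Canonical P1_group G := group (group_set_P1 G).

Lemma sum_cent1_layer G n A B c :
    B \subset A -> {in A :\: B, forall x, #|'C_G[x]| = c} ->
  (\sum_(x in A) #|'C_G[x]| ^ n
    = \sum_(x in B) #|'C_G[x]| ^ n + (#|A| - #|B|) * c ^ n)%N.
Proof.
move=> sBA Cc.
rewrite (sum_nat_layer (F := fun x => (#|'C_G[x]| ^ n)%N) (c := (c ^ n)%N) sBA) //.
by move=> x ABx; rewrite Cc.
Qed.

Lemma Pser_lcn G j : 1 < j -> Pser G j = 'L_j(G).
Proof. by case: j => [|[|j]]. Qed.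

Lemma lcnS_comm G i : 0 < i -> 'L_i.+1(G) = [~: 'L_i(G), G].
Proof. by case: i. Qed.

Lemma lcn_norm_lcn G i j : 'L_i(G) \subset 'N('L_j(G)).
Proof. exact: subset_trans (lcn_sub i G) (lcn_norm j G). Qed.

Lemma P1_sub G : P1 G \subset G.
Proof. by apply/subsetP=> g /cent_modP[]. Qed.

End GroupFacts.

Section MaximalClass.
Variables (gT : finGroupType) (G : {group gT}) (p m : nat).
Hypotheses (p_pr : prime p) (m_gt3 : 3 < m) (oG : #|G| = (p ^ m)%N)
  (clG : nil_class G = m.-1).

Let m_gt2 : 2 < m. Proof. exact: ltnW. Qed.
Let predmE : m.-1 = (m - 2).+1. Proof. lia. Qed.
Let subm2E : m - 2 = (m - 3).+1. Proof. lia. Qed.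
Let pG : p.-group G. Proof. by rewrite /pgroup oG pnatX pnat_id. Qed.
Let nilG : nilpotent G. Proof. exact: pgroup_nil pG. Qed.

Lemma lcn_max_class_eq1 : 'L_m(G) = 1.
Proof.
by rewrite -(ltn_predK m_gt3); apply/(lcn_nil_classP _ nilG); rewrite clG.
Qed.

Lemma lcn_max_class_neq1 i : i < m -> 'L_i(G) != 1.
Proof.
move=> lt_im; apply/eqP=> Li1.
have : nil_class G <= m.-2.
  apply/(lcn_nil_classP _ nilG)/trivgP; rewrite -Li1 lcn_sub_leq //; lia.
by rewrite clG; lia.
Qed.

Lemma lcn_max_class_proper i : 0 < i < m -> 'L_i.+1(G) \proper 'L_i(G).
Proof.
case: i => // i /andP[_ lt_im]; rewrite lcnSn.
apply: (nil_comm_properl nilG (lcn_sub _ _) (lcn_max_class_neq1 lt_im)).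
by rewrite subsetI subxx lcn_norm.
Qed.

Lemma logn_lcn2_max_class : logn p #|'L_2(G)| <= m - 2.
Proof.
have : logn p #|'L_2(G)| < m.
  rewrite -(pfactorK m p_pr) -oG.
  exact: properG_ltn_log pG (lcn_max_class_proper (i := 1) ltac:(lia)).
rewrite leq_eqVlt => /orP[/eqP logL2 | lt_L2]; last lia.
have idxL2 : #|G : 'L_2(G)| = p.
  apply/eqP; rewrite -(eqn_pmul2l (cardG_gt0 'L_2(G))) Lagrange ?lcn_sub //.
  by rewrite (card_pgroup (pgroupS (lcn_sub 2 G) pG)) -expnSr logL2 oG.
have cycG : cyclic G.
  apply: cyclic_nilpotent_quo_der1_cyclic nilG _; apply: prime_cyclic.
  by rewrite -lcn2 card_quotient ?lcn_norm ?idxL2.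
have := lcn_max_class_neq1 (i := 2) ltac:(lia).
by rewrite lcn2 (derG1P (cyclic_abelian cycG)) eqxx.
Qed.

Lemma card_lcn i : 2 <= i <= m -> #|'L_i(G)| = (p ^ (m - i))%N.
Proof.
move=> le_2im; rewrite (card_pgroup (pgroupS (lcn_sub i G) pG)).
congr (p ^ _)%N.
apply: (decreasing_nat_eq_sub (f := fun j => logn p #|'L_j(G)|) (i0 := 2)) => //.
  move=> j /andP[le_2j lt_jm].
  apply: properG_ltn_log (pgroupS (lcn_sub j G) pG) _.
  by apply: lcn_max_class_proper; lia.
exact: logn_lcn2_max_class.
Qed.

Lemma index_lcn i : 2 <= i < m -> #|'L_i(G) : 'L_i.+1(G)| = p.
Proof.
move=> /andP[le_2i lt_im]; apply/eqP.
rewrite -(eqn_pmul2l (cardG_gt0 'L_i.+1(G))) Lagrange ?lcn_subS //.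
by rewrite !card_lcn ?le_2i 1?ltnW // -expnSr subnSK.
Qed.

Lemma lcn2_sub_P1 : 'L_2(G) \subset P1 G.
Proof.
apply/subsetP=> x L2x; apply/cent_modP; split=> [|y L2y].
  exact: subsetP (lcn_sub 2 G) x L2x.
apply: subsetP (mem_commg L2x L2y); apply: der1_min (lcn_norm_lcn G 2 4) _.
apply: card_p2group_abelian p_pr _; rewrite card_quotient ?lcn_norm_lcn //.
rewrite -(Lagrange_index (lcn_subS 2 G) (lcn_subS 3 G)).
by rewrite !index_lcn ?mulnn //; lia.
Qed.

Lemma P1_proper : P1 G \proper G.
Proof.
rewrite properE P1_sub; apply: contraL (lcn_max_class_proper (i := 3) m_gt3).
move=> sGP1; rewrite properE lcn_subS negbK lcnSn.
apply/commG_subP=> y g L2y Gg.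
have /cent_modP[_ cgL4] := subsetP sGP1 g Gg.
by rewrite mem_commgC cgL4.
Qed.

(* For x in 'L_2(G) \ 'L_3(G), G permutes the p cosets of 'L_4(G) contained
   in x 'L_3(G), and the stabiliser of x 'L_4(G) lies in P1 G. *)
Lemma index_P1_le : #|G : P1 G| <= p.
Proof.
have [_ [x L2x notL3x]] := properP (lcn_max_class_proper (i := 2) ltac:(lia)).
set X := x *: 'L_4(G).
have XJ g : g \in G -> X :^ g = (x ^ g) *: 'L_4(G).
  move=> Gg; rewrite /X conjsMg conjg_set1; congr (_ * _).
  exact/normP/(subsetP (lcn_norm 4 G)).
have sCXP1 : 'C_G[X | 'Js] \subset P1 G.
  apply/subsetP=> g; rewrite inE astab1Js => /andP[Gg /normP].
  rewrite XJ // => XgE.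
  have cxgL4 : [~ x, g] \in 'L_4(G).
    by rewrite commgEl -mem_lcoset -/X -XgE lcoset_refl.
  pose U := Group (group_set_cent_mod [set g] (lcn_norm_lcn G 2 4)).
  have UE : U :=: 'L_2(G).
    apply: (prime_index_cover (H := 'L_3(G))); rewrite ?index_lcn //.
    - apply/subsetP=> u L3u; apply/cent_modP.
      split=> [|_ /set1P->]; last exact: mem_commg.
      exact: subsetP (lcn_subS 2 G) u L3u.
    - by apply/subsetP=> u /cent_modP[].
    - apply: contra notL3x => sUL3; apply: (subsetP sUL3).
      by apply/cent_modP; split=> // _ /set1P->.
  apply/cent_modP; split=> // y L2y.
  rewrite -UE in L2y; have /cent_modP[_ cyL4] := L2y.
  by rewrite mem_commgC cyL4 ?set11.
apply: leq_trans (dvdn_leq (indexg_gt0 _ _) (indexgS G sCXP1)) _.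
rewrite -card_orbit -(index_lcn (i := 3)) // -card_lcosets.
apply: leq_trans (leq_imset_card (fun C => x *: C) _).
apply/subset_leq_card/subsetP=> _ /imsetP[g Gg ->].
rewrite /= XJ // conjg_mulR lcosetM.
apply: imset_f; rewrite mem_lcosets; apply: (subsetP (mulg_subl _ _)) => //.
by rewrite (lcnSn 1); apply: mem_commg.
Qed.

Lemma index_P1 : #|G : P1 G| = p.
Proof.
apply/eqP; rewrite eqn_leq index_P1_le.
exact: index_proper_pgroup p_pr pG P1_proper.
Qed.

Lemma commg_P1_lcn l : is_degree_of_commutativity G m l -> 0 < l ->
  forall j, 1 < j -> [~: P1 G, 'L_j(G)] \subset 'L_j.+2(G).
Proof.
case=> [[cP1P1 _] | [_ [degl _]]] l_gt0 j j_gt1.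
  suff -> : [~: P1 G, 'L_j(G)] = 1 by rewrite sub1G.
  apply/commG1P; apply: subset_trans cP1P1 (centS _).
  exact: subset_trans (lcn_sub_leq G j_gt1) lcn2_sub_P1.
have := degl 1%N j isT (ltnW j_gt1).
rewrite (Pser_lcn G j_gt1) (@Pser_lcn _ G (1 + j + l)); last lia.
by move/subset_trans; apply; apply: lcn_sub_leq; lia.
Qed.

Lemma maximal_P1 : maximal (P1 G) G.
Proof. by apply: p_index_maximal; rewrite ?P1_sub ?index_P1. Qed.

Lemma lcn2_sub_Phi : 'L_2(G) \subset 'Phi(G).
Proof. by rewrite (Phi_joing pG) joing_subl. Qed.

Lemma lcn_max_class_center : 'L_m.-1(G) \subset 'Z(G).
Proof.
rewrite subsetI lcn_sub; apply/commG1P/trivgP.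
by rewrite -lcn_max_class_eq1 -{2}(ltn_predK m_gt3) lcnSnS.
Qed.

Lemma card_lcn_pred : #|'L_m.-1(G)| = p.
Proof.
rewrite card_lcn; last lia.
by rewrite (_ : m - m.-1 = 1%N) ?expn1; lia.
Qed.

Lemma cent1_lcn_pred x : x \in 'L_m.-1(G) -> 'C_G[x] = G.
Proof.
move=> Lx; apply/setIidPl; rewrite sub_cent1.
by have /setIP[] := subsetP lcn_max_class_center x Lx.
Qed.

Lemma sum_cent1_lcn_pred n :
  (\sum_(x in 'L_m.-1(G)) #|'C_G[x]| ^ n = p * p ^ (m * n))%N.
Proof.
rewrite (eq_bigr (fun=> p ^ (m * n))%N) ?sum_nat_const ?card_lcn_pred //.
by move=> x Lx; rewrite cent1_lcn_pred // oG expnM.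
Qed.

Lemma card_P1 : #|P1 G| = (p ^ m.-1)%N.
Proof.
apply/eqP; rewrite -(eqn_pmul2r (prime_gt0 p_pr)) -expnSr (ltn_predK m_gt3) -oG.
by rewrite -[X in (_ * X == _)%N]index_P1 Lagrange ?P1_sub.
Qed.

Lemma lcn3_sub_P1 : 'L_3(G) \subset P1 G.
Proof. exact: subset_trans (lcn_subS 2 G) lcn2_sub_P1. Qed.

Lemma lcn_pred_sub_P1 : 'L_m.-1(G) \subset P1 G.
Proof. by apply: subset_trans lcn2_sub_P1; apply: lcn_sub_leq; lia. Qed.

Lemma lcn_pred_sub_cent1 s : s \in G -> 'L_m.-1(G) \subset 'C_G[s].
Proof.
move=> Gs; rewrite subsetI lcn_sub sub_cent1; apply: subsetP _ s Gs.
by rewrite centsC; apply: subset_trans lcn_max_class_center (subsetIr _ _).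
Qed.

Lemma cent1_join_lcn2_proper s :
  s \in G :\: P1 G -> 'C_G[s] <*> 'L_2(G) \proper G.
Proof.
case/setDP=> Gs notP1s; rewrite properE join_subG subsetIl lcn_sub /=.
apply: contra notP1s => sG_CL2.
have CsE : <<'C_G[s]>> = G.
  apply: Phi_nongen; apply/eqP; rewrite eqEsubset join_subG Phi_sub subsetIl /=.
  apply: subset_trans sG_CL2 _; rewrite join_subG joing_subr /=.
  exact: subset_trans lcn2_sub_Phi (joing_subl _ _).
apply/cent_modP; split=> // y L2y; rewrite genGid in CsE.
have /setIP[_ /cent1P cys] : y \in 'C_G[s].
  by rewrite CsE (subsetP (lcn_sub 2 G)).
by have /commgP/eqP-> := commute_sym cys.
Qed.

Section PositiveDegreeOfCommutativity.
Hypothesis cP1L : forall j, 1 < j -> [~: P1 G, 'L_j(G)] \subset 'L_j.+2(G).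

(* P1 G and s generate G, so y is central modulo 'L_i.+2(G); if y were not
   in 'L_i.+1(G) it would generate 'L_i(G) modulo 'L_i.+1(G), and then
   'L_i.+1(G) = ['L_i(G), G] would lie in 'L_i.+2(G). *)
Lemma lcn_cent_step s i y : s \in G :\: P1 G -> 1 < i <= m - 2 ->
  y \in 'L_i(G) -> [~ y, s] \in 'L_i.+2(G) -> y \in 'L_i.+1(G).
Proof.
case/setDP=> Gs notP1s /andP[i_gt1 le_im2] Liy cysL.
pose T := Group (group_set_cent_mod [set y] (lcn_norm i.+2 G)).
have TE : T :=: G.
  apply: (prime_index_cover (H := P1 G)); rewrite ?index_P1 //.
  - apply/subsetP=> g P1g; apply/cent_modP.
    split=> [|_ /set1P->]; first exact: subsetP (P1_sub G) g P1g.
    exact: subsetP (cP1L i_gt1) _ (mem_commg P1g Liy).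
  - by apply/subsetP=> g /cent_modP[].
  - apply: contra notP1s => sTP1; apply: (subsetP sTP1); apply/cent_modP.
    by split=> // _ /set1P->; rewrite mem_commgC.
apply: contraT => notLi1y.
pose U := Group (group_set_cent_mod G (lcn_norm_lcn G i i.+2)).
have UE : U :=: 'L_i(G).
  apply: (prime_index_cover (H := 'L_i.+1(G))).
  - by rewrite index_lcn //; lia.
  - apply/subsetP=> u Li1u; apply/cent_modP.
    split=> [|g Gg]; first exact: subsetP (lcn_subS i G) u Li1u.
    exact: subsetP (lcnSnS i.+1 G) _ (mem_commg Li1u Gg).
  - by apply/subsetP=> u /cent_modP[].
  - apply: contra notLi1y => sULi1; apply: (subsetP sULi1); apply/cent_modP.
    split=> // g Gg; rewrite -TE in Gg; have /cent_modP[_ cgyL] := Gg.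
    by rewrite mem_commgC cgyL ?set11.
have /proper_subn/negP[] := lcn_max_class_proper (i := i.+1) ltac:(lia).
rewrite lcnS_comm 1?ltnW //; apply/commG_subP=> u g Liu Gg.
by rewrite -UE in Liu; have /cent_modP[_ ->] := Liu.
Qed.

Lemma cent1_out_lcn2 s :
  s \in G :\: P1 G -> 'C_G[s] :&: 'L_2(G) \subset 'L_m.-1(G).
Proof.
move=> outs; apply/subsetP=> y /setIP[/setIP[_ /cent1P cys] L2y].
suff Ly k : k <= m - 3 -> y \in 'L_k.+2(G).
  by rewrite predmE subm2E; apply: Ly.
elim: k => [//| k IHk] le_k; apply: lcn_cent_step outs _ (IHk (ltnW le_k)) _.
  lia.
by have /commgP/eqP-> := cys.
Qed.

Lemma card_cent1_out s : s \in G :\: P1 G -> #|'C_G[s]| = (p ^ 2)%N.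
Proof.
move=> outs; have /setDP[Gs notP1s] := outs.
have ltLC : 'L_m.-1(G) \proper 'C_G[s].
  rewrite properE lcn_pred_sub_cent1 //=; apply: contra notP1s => sCL.
  exact/(subsetP lcn_pred_sub_P1)/(subsetP sCL)/subcent1_id.
have le_CL2 : (p * #|('C_G[s] * 'L_2(G))%g| <= p ^ m)%N.
  rewrite -oG -norm_joinEl ?(subset_trans (subsetIl _ _) (lcn_norm 2 G)) //.
  exact: card_proper_pgroup p_pr pG (cent1_join_lcn2_proper outs).
have le_CIL2 : #|'C_G[s] :&: 'L_2(G)| <= p.
  by rewrite -card_lcn_pred subset_leq_card ?cent1_out_lcn2.
apply/eqP; rewrite eqn_leq; apply/andP; split; last first.
  rewrite -mulnn -[X in (_ * X <= _)%N]card_lcn_pred.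
  exact: card_proper_pgroup p_pr (pgroupS (subsetIl _ _) pG) ltLC.
have pmE : (p ^ m = p ^ 2 * p ^ (m - 2))%N by rewrite -expnD subnKC // ltnW.
have := leq_mul le_CL2 le_CIL2.
rewrite -mulnA -mul_cardG /= card_lcn ?(ltnW m_gt2) // pmE.
rewrite [in leqRHS]mulnC !leq_pmul2l ?prime_gt0 //.
by rewrite leq_pmul2r ?expn_gt0 ?prime_gt0.
Qed.

Lemma cent1_P1_sub x : x \in P1 G :\: 'L_m.-1(G) -> 'C_G[x] \subset P1 G.
Proof.
case/setDP=> P1x notLx; apply/subsetP=> s /setIP[Gs cxs].
apply: contraR notLx => notP1s.
have outs : s \in G :\: P1 G by rewrite inE notP1s.
pose D := (P1 G :&: 'C_G[s])%G.
have sLD : 'L_m.-1(G) \subset D.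
  by rewrite subsetI lcn_pred_sub_P1 lcn_pred_sub_cent1.
have DE : 'L_m.-1(G) :=: D.
  apply/eqP; rewrite eqEcard sLD card_lcn_pred -(leq_pmul2l (prime_gt0 p_pr)).
  rewrite mulnn -(card_cent1_out outs).
  rewrite card_proper_pgroup ?(pgroupS (subsetIl _ _) pG) //.
  rewrite properE subsetIr; apply: contra notP1s => sCD.
  by have /setIP[] := subsetP sCD s (subcent1_id Gs).
by rewrite DE inE P1x inE (subsetP (P1_sub G)) // cent1C.
Qed.

Lemma cent1_P1_eq x : x \in P1 G :\: 'L_m.-1(G) -> P1 G \subset 'C[x] ->
  'C_G[x] = P1 G.
Proof.
move=> xP1L sP1C; apply/eqP.
by rewrite eqEsubset cent1_P1_sub // subsetI P1_sub.
Qed.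

Lemma sum_cent1_G n :
  (\sum_(g in G) #|'C_G[g]| ^ n
    = \sum_(x in P1 G) #|'C_G[x]| ^ n + (p ^ m - p ^ m.-1) * p ^ (2 * n))%N.
Proof.
rewrite (sum_cent1_layer n (P1_sub G) (c := p ^ 2)) ?oG ?card_P1 ?expnM //.
exact: card_cent1_out.
Qed.

Lemma alpha_abelian_P1 n : abelian (P1 G) ->
  (p ^ m * alpha G n = p * p ^ (m * n) + (p ^ m - p ^ m.-1) * p ^ (2 * n)
    + (p ^ m.-1 - p) * p ^ (m.-1 * n))%N.
Proof.
move=> cP1P1; rewrite -oG mul_card_alpha sum_cent1_G.
rewrite (sum_cent1_layer n lcn_pred_sub_P1 (c := p ^ m.-1)).
  by rewrite sum_cent1_lcn_pred card_P1 card_lcn_pred oG -expnM addnAC.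
move=> x xP1L; have /setDP[P1x _] := xP1L.
by rewrite cent1_P1_eq ?card_P1 // sub_cent1 (subsetP cP1P1).
Qed.

Section CentralLcn3.
Hypotheses (cP1L3 : [~: P1 G, 'L_3(G)] = 1) (ncP1 : ~~ abelian (P1 G)).

(* If P1 G centralised x, 'Z(P1 G) would properly contain 'L_3(G) and so
   have index p in P1 G. *)
Lemma card_cent1_P1_lcn3 x :
  x \in P1 G :\: 'L_3(G) -> #|'C_G[x]| = (p ^ (m - 2))%N.
Proof.
case/setDP=> P1x notL3x.
have cP1L3' : P1 G \subset 'C('L_3(G)) by apply/commG1P.
have sCP1 : 'C_G[x] \subset P1 G.
  apply: cent1_P1_sub; rewrite inE P1x andbT; apply: contra notL3x.
  by apply: subsetP; apply: lcn_sub_leq; lia.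
have ltL3C : 'L_3(G) \proper 'C_G[x].
  rewrite properE subsetI lcn_sub sub_cent1 (subsetP cP1L3') //=.
  apply: contra notL3x => sCL3.
  exact/(subsetP sCL3)/subcent1_id/(subsetP (P1_sub G)).
have ltCP1 : 'C_G[x] \proper P1 G.
  rewrite properE sCP1; apply: contra ncP1 => sP1C.
  have pP1 := pgroupS (P1_sub G) pG.
  apply: (center_index_le_p_abelian p_pr pP1).
  have ltL3Z : 'L_3(G) \proper 'Z(P1 G).
    rewrite properE subsetI lcn3_sub_P1 centsC cP1L3' /=.
    apply: contra notL3x => sZL3; apply: (subsetP sZL3).
    by rewrite inE P1x -sub_cent1 (subset_trans sP1C) ?subsetIr.
  have := card_proper_pgroup p_pr (pgroupS (center_sub (P1 G)) pP1) ltL3Z.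
  rewrite /= card_P1 card_lcn // -expnS -subm2E predmE.
  by rewrite expnS leq_pmul2l ?prime_gt0.
apply/eqP; rewrite eqn_leq; apply/andP; split.
  have := card_proper_pgroup p_pr (pgroupS (P1_sub G) pG) ltCP1.
  by rewrite card_P1 predmE expnS leq_pmul2l ?prime_gt0.
have := card_proper_pgroup p_pr (pgroupS (subsetIl _ _) pG) ltL3C.
by rewrite card_lcn // -expnS -subm2E.
Qed.

Lemma alpha_central_lcn3 n :
  (p ^ m * alpha G n = p * p ^ (m * n) + (p ^ m - p ^ m.-1) * p ^ (2 * n)
    + (p ^ m.-1 - p ^ (m - 3)) * p ^ ((m - 2) * n)
    + (p ^ (m - 3) - p) * p ^ (m.-1 * n))%N.
Proof.
have sLL3 : 'L_m.-1(G) \subset 'L_3(G) by apply: lcn_sub_leq; lia.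
rewrite -oG mul_card_alpha sum_cent1_G.
rewrite (sum_cent1_layer n lcn3_sub_P1 (c := p ^ (m - 2))); last first.
  exact: card_cent1_P1_lcn3.
rewrite (sum_cent1_layer n sLL3 (c := p ^ m.-1)); last first.
  move=> x /setDP[L3x notLx].
  have xP1L : x \in P1 G :\: 'L_m.-1(G).
    by rewrite in_setD notLx (subsetP lcn3_sub_P1).
  rewrite cent1_P1_eq ?card_P1 // sub_cent1.
  by apply: subsetP L3x; rewrite centsC; apply/commG1P.
rewrite sum_cent1_lcn_pred card_lcn_pred card_lcn // card_P1 oG -!expnM.
by rewrite addnAC (addnAC (p * _)%N) addnAC.
Qed.

End CentralLcn3.

End PositiveDegreeOfCommutativity.

Lemma abelian_maximal_P1 (A : {group gT}) :
  maximal A G -> abelian A -> A :=: P1 G.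
Proof.
move=> maxA cAA.
have sAP1 : A \subset P1 G.
  apply/subsetP=> a Aa; apply/cent_modP; split=> [|y L2y].
    exact: subsetP (proper_sub (maxgroupp maxA)) a Aa.
  have Ay := subsetP (subset_trans lcn2_sub_Phi (Phi_sub_max maxA)) y L2y.
  by have /commgP/eqP-> := centsP cAA a Aa y Ay.
apply/eqP; rewrite eqEsubset sAP1 /= -indexg_eq1 -(eqn_pmul2l (prime_gt0 p_pr)).
rewrite -{1}index_P1 (Lagrange_index (P1_sub G) sAP1).
by rewrite (p_maximal_index pG maxA) muln1.
Qed.

End MaximalClass.

Local Close Scope group_scope.

Theorem theorem7p6 (gT : finGroupType) (G : {group gT}) (p m : nat) :
  prime p -> 4 <= m -> #|G| = p ^ m -> nil_class G = m.-1 ->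
  (exists l, is_degree_of_commutativity G m l /\ 0 < l) ->
  ((exists A : {group gT}, maximal A G /\ abelian A) ->
     forall n, p ^ m * alpha G n =
       p * p ^ (m * n) + (p ^ m - p ^ m.-1) * p ^ (2 * n)
       + (p ^ m.-1 - p) * p ^ (m.-1 * n)) /\
  ([~: Pser G 1, Pser G 3]%g = 1%g ->
   (forall A : {group gT}, maximal A G -> ~~ abelian A) ->
     forall n, p ^ m * alpha G n =
       p * p ^ (m * n) + (p ^ m - p ^ m.-1) * p ^ (2 * n)
       + (p ^ m.-1 - p ^ (m - 3)) * p ^ ((m - 2) * n)
       + (p ^ (m - 3) - p) * p ^ (m.-1 * n)).
Proof.
move=> p_pr m_gt3 oG clG [l [degl l_gt0]].
have cP1L := commg_P1_lcn p_pr m_gt3 oG clG degl l_gt0.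
split=> [[A [maxA cAA]] | cP1L3 noncA] n.
  apply: (alpha_abelian_P1 p_pr m_gt3 oG clG cP1L).
  by rewrite -(abelian_maximal_P1 p_pr m_gt3 oG clG maxA cAA).
apply: (alpha_central_lcn3 p_pr m_gt3 oG clG cP1L).
  by rewrite -(@Pser_lcn _ G 3).
exact/noncA/(maximal_P1 p_pr m_gt3 oG clG).
Qed.
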